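(* Let $G$ be a finite abelian group, $g\in G$ with $\operatorname{ord}(g)=6$, and $G_0=\{0,g,3g,-g\}$. Then $\mathcal L(G_0)\subset\mathcal L(C_2^5)$.
   Context: $C_2^r$ denotes an elementary abelian $2$-group of rank $r$. For a subset $G_0$ of a finite abelian group $G$, a sequence over $G_0$ is an element of the free abelian monoid $\mathcal F(G_0)$ with basis $G_0$ (a finite unordered list of elements of $G_0$, repetitions allowed). $\mathcal B(G_0)$ is the monoid of zero-sum sequences over $G_0$ (including the empty sequence). An atom is a minimal zero-sum sequence, i.e. a nonempty zero-sum sequence that is not a product of two nonempty zero-sum sequences. For $B\in\mathcal B(G_0)$, $\mathsf L(B)=\{k\in\mathbb N_0: B \text{ is a product of } k \text{ atoms of } \mathcal B(G_0)\}$, and $\mathcal L(G_0)=\{\mathsf L(B):B\in\mathcal B(G_0)\}$; $\mathcal L(G)$ is the case $G_0=G$. *)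

From mathcomp Require Import all_boot all_algebra.
Set Implicit Arguments. Unset Strict Implicit. Unset Printing Implicit Defensive.
Import GRing.Theory.
Local Open Scope ring_scope.

(* Sequences over a finite abelian group G, i.e. elements of the free abelian
   monoid F(G), represented by their multiplicity functions G -> nat. *)
Definition fseq (G : finType) := {ffun G -> nat}.

Definition supp_in (G : finType) (G0 : {set G}) (S : fseq G) : Prop :=
  forall x, x \notin G0 -> S x = 0%N.

Definition fs_len (G : finType) (S : fseq G) : nat := (\sum_(x : G) S x)%N.

Definition fs_mul (G : finType) (S T : fseq G) : fseq G := [ffun x => (S x + T x)%N].

Definition fs_one (G : finType) : fseq G := [ffun=> 0%N].

Definition fs_sigma (G : finZmodType) (S : fseq G) : G := \sum_(x : G) x *+ S x.

Definition zero_sum_over (G : finZmodType) (G0 : {set G}) (S : fseq G) : Prop :=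
  supp_in G0 S /\ fs_sigma S = 0.

Definition atom_over (G : finZmodType) (G0 : {set G}) (A : fseq G) : Prop :=
  [/\ zero_sum_over G0 A, (0 < fs_len A)%N &
      forall U V, zero_sum_over G0 U -> zero_sum_over G0 V -> A = fs_mul U V ->
        fs_len U = 0%N \/ fs_len V = 0%N].

Definition lengths (G : finZmodType) (G0 : {set G}) (B : fseq G) (k : nat) : Prop :=
  exists As : seq (fseq G),
    [/\ size As = k, (forall A, A \in As -> atom_over G0 A) &
        B = foldr (@fs_mul G) (@fs_one G) As].

Definition in_system_of_lengths (G : finZmodType) (G0 : {set G}) (L : nat -> Prop) : Prop :=
  exists B, zero_sum_over G0 B /\ forall k, L k <-> lengths G0 B k.

Definition system_subset (G H : finZmodType) (G0 : {set G}) (H0 : {set H}) : Prop :=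
  forall L : nat -> Prop, in_system_of_lengths G0 L -> in_system_of_lengths H0 L.

Definition has_order (G : zmodType) (g : G) (n : nat) : Prop :=
  [/\ (0 < n)%N, g *+ n = 0 & forall k, (0 < k < n)%N -> g *+ k != 0].

Definition C2 (r : nat) : finZmodType := 'rV['F_2]_r.

From mathcomp Require Import all_boot all_algebra zify.
Set Implicit Arguments. Unset Strict Implicit. Unset Printing Implicit Defensive.
Import GRing.Theory.

(* A sequence supported on a duplicate-free list s = [s_1; ...; s_n] is coded
   by its count vector d in nat^n (fs_counts).  Zero-sumness becomes a
   congruence on d, atoms become the minimal nonzero zero-sum vectors, and
   a factorization of B into k atoms becomes a decomposition of the count
   vector of B as a sum of k atom vectors (decomp_length).

   For G0 the 7 atoms are 0, g^6, (-g)^6, g(-g), (3g)^2, g^3(3g), (3g)(-g)^3;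
   the lengths of 0^K g^a (3g)^b (-g)^c form an arithmetic progression with
   difference 4 if b = 0 and difference 2 if b > 0.  In C_2^5 with basis
   e_1..e_5 we use H0 = {0, e_1, ..., e_5, e_1+...+e_5, e_1+e_2+e_3}, which
   has 11 atoms, and exhibit for each such progression a sequence over H0
   realizing it (G0_lengths_in_H). *)

Definition vle (u v : seq nat) : bool := all2 leq u v.

Lemma vle_size u v : vle u v -> size u = size v.
Proof. by elim: u v => [|x u IH] [|y v] //= /andP[_ /IH ->]. Qed.

Lemma vleP u v :
  reflect (size u = size v /\ forall i, nth 0 u i <= nth 0 v i) (vle u v).
Proof.
rewrite /vle; elim: u v => [|x u IH] [|y v] /=.
- by constructor; split => // i; rewrite nth_nil.
- by constructor; case.
- by constructor; case.
apply: (iffP andP) => [[xy /IH[-> le]]|[[sz] le]].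
  by split => //; case => [|i] //; exact: le.
by split; [exact: (le 0) | apply/IH; split => // i; exact: (le i.+1)].
Qed.

Lemma vle_map (T : Type) (f h : T -> nat) (s : seq T) :
  vle (map f s) (map h s) = all (fun x => f x <= h x) s.
Proof. by elim: s => //= x s ->. Qed.

Fixpoint below (v : seq nat) : seq (seq nat) :=
  if v is n :: v' then [seq i :: u | i <- iota 0 n.+1, u <- below v'] else [:: [::]].

Lemma mem_below u v : (u \in below v) = vle u v.
Proof.
elim: v u => [|n v IH] [|i u] //; first by apply/allpairsPdep => -[j [w []]].
apply/allpairsPdep/idP => [[j [w [jn wv [-> ->]]]]|/andP[iv uv]].
  by rewrite /vle /= -/(vle w v) -IH wv andbT; move: jn; rewrite mem_iota.
by exists i, u; rewrite mem_iota IH.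
Qed.

Definition unit_vec (n i m : nat) : seq nat := mkseq (fun j => if j == i then m else 0) n.

Definition minimal_zero_sum (zsum : pred (seq nat)) (d : seq nat) : bool :=
  [&& zsum d, 0 < sumn d & all (fun u => zsum u ==> (sumn u == 0) || (u == d)) (below d)].

Definition wsum (ws d : seq nat) : nat := sumn [seq p.1 * p.2 | p <- zip ws d].

Definition lincomb (n : nat) (cs : seq nat) (ds : seq (seq nat)) : seq nat :=
  mkseq (fun i => sumn [seq p.1 * nth 0 p.2 i | p <- zip cs ds]) n.

Definition decomp_length (ds : seq (seq nat)) (a : seq nat) (k : nat) : Prop :=
  exists cs, [/\ size cs = size ds, k = sumn cs & a = lincomb (size a) cs ds].

Definition in_progression (n0 d T k : nat) : Prop := exists2 t, t <= T & k = n0 + d * t.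

Definition covered (cands : seq (seq nat)) (a : seq nat) : bool := has (vle^~ a) cands.

Lemma covered_bounded (zsum : pred (seq nat)) cands b a :
  all (fun i => unit_vec (size b) i (nth 0 b i).+1 \in cands) (iota 0 (size b)) ->
  all (fun u => zsum u ==> (0 < sumn u) ==> covered cands u) (below b) ->
  size a = size b -> zsum a -> 0 < sumn a -> covered cands a.
Proof.
move=> /allP units /allP small sab zsa pos.
have [ab|nab] := boolP (vle a b).
  by have := small a; rewrite mem_below ab zsa pos => /(_ isT).
have [/hasP[i]|] := boolP (has (fun i => nth 0 b i < nth 0 a i) (iota 0 (size b))).
  move=> ib lt; apply/hasP; exists (unit_vec (size b) i (nth 0 b i).+1); first exact: units.
  apply/vleP; rewrite size_mkseq; split=> // j.
  case: (ltnP j (size b)) => jb; last by rewrite nth_default ?size_mkseq.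
  by rewrite nth_mkseq //; case: eqP => [->|].
move/hasPn => le; case/negP: nab; apply/vleP; split => // i.
case: (ltnP i (size b)) => ib; last by rewrite !nth_default ?sab.
by rewrite leqNgt le // mem_iota.
Qed.

Lemma leq_sumn_mem (s : seq nat) x : x \in s -> (x <= sumn s)%N.
Proof.
elim: s => //= y s IH; rewrite inE => /predU1P[->|/IH le]; first exact: leq_addr.
exact: leq_trans le (leq_addl _ _).
Qed.

Lemma mem_zip2 (T U : eqType) (cs : seq T) (ds : seq U) p : p \in zip cs ds -> p.2 \in ds.
Proof.
elim: cs ds => [|c cs IH] [|d ds] //= /predU1P[->|/IH]; first exact: mem_head.
by rewrite inE orbC => ->.
Qed.

Lemma sumn_incr_nth (v : seq nat) i : sumn (incr_nth v i) = (sumn v).+1.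
Proof. by elim: v i => [|c v IH] [|i] //=; [elim: i => //= i -> | rewrite IH addnS]. Qed.

Lemma zip_mapr (T U V : Type) (f : U -> V) (cs : seq T) (ds : seq U) :
  zip cs (map f ds) = [seq (p.1, f p.2) | p <- zip cs ds].
Proof. by elim: cs ds => [|c cs IH] [|d ds] //=; rewrite IH. Qed.

Section FreeMonoid.
Variable G : finZmodType.
Implicit Types (S U V A B D : fseq G).

Lemma fs_mulE S U x : fs_mul S U x = (S x + U x)%N.
Proof. by rewrite ffunE. Qed.

Lemma sigma_mul S U : fs_sigma (fs_mul S U) = (fs_sigma S + fs_sigma U)%R.
Proof. by rewrite /fs_sigma -big_split; apply: eq_bigr => x _; rewrite ffunE mulrnDr. Qed.

Lemma len_eq0 S : fs_len S = 0%N -> forall x, S x = 0%N.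
Proof. by move/eqP; rewrite /fs_len sum_nat_eq0 => /forallP h x; apply/eqP/(implyP (h x)). Qed.

Lemma foldr_mulE As x : foldr (@fs_mul G) (fs_one G) As x = sumn [seq A x | A <- As].
Proof. by elim: As => [|A As IH] /=; rewrite ffunE //= IH. Qed.

Lemma atom_le (G0 : {set G}) A D :
  atom_over G0 A -> zero_sum_over G0 D -> (0 < fs_len D)%N ->
  (forall x, D x <= A x)%N -> A = D.
Proof.
move=> [[sA zA] _ minA] [sD zD] lD le.
pose E : fseq G := [ffun x => (A x - D x)%N].
have AE : A = fs_mul D E by apply/ffunP => x; rewrite !ffunE subnKC.
have zE : zero_sum_over G0 E.
  split; first by move=> x /sA; rewrite ffunE => ->.
  by move: zA; rewrite AE sigma_mul zD add0r.
have [D0|/len_eq0 E0] := minA D E (conj sD zD) zE AE; first by rewrite D0 in lD.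
by apply/ffunP => x; move: (E0 x) (le x); rewrite ffunE; lia.
Qed.

Lemma atom_over_setT (G0 : {set G}) A : supp_in G0 A -> atom_over [set: G] A <-> atom_over G0 A.
Proof.
move=> sA; have sub U V : A = fs_mul U V -> supp_in G0 U /\ supp_in G0 V.
  by move=> AUV; split=> x /sA; rewrite AUV fs_mulE; lia.
have inT U : fs_sigma U = 0%R -> zero_sum_over [set: G] U by split=> // x; rewrite inE.
split=> [[[_ zA] lA minA]|[[_ zA] lA minA]]; split=> //.
- by move=> U V [_ zU] [_ zV] AUV; apply: minA AUV; apply: inT.
- by apply: inT.
move=> U V [_ zU] [_ zV] AUV; have [sU sV] := sub U V AUV.
exact: minA AUV.
Qed.

Lemma lengths_setT (G0 : {set G}) B k : supp_in G0 B -> lengths [set: G] B k <-> lengths G0 B k.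
Proof.
move=> sB; have sA As A : B = foldr (@fs_mul G) (fs_one G) As -> A \in As -> supp_in G0 A.
  move=> eB AAs x /sB; rewrite eB foldr_mulE => h; apply/eqP.
  by rewrite -leqn0 -h; apply/leq_sumn_mem/map_f.
split=> -[As [sz atoms eB]]; exists As; split=> // A AAs.
  by rewrite -atom_over_setT; [exact: atoms | exact: sA eB AAs].
by rewrite atom_over_setT; [exact: atoms | exact: sA eB AAs].
Qed.

Definition fs_comb (cs : seq nat) (cl : seq (fseq G)) (x : G) : nat :=
  sumn [seq (p.1 * p.2 x)%N | p : nat * fseq G <- zip cs cl].

Lemma fs_comb_incr cs cl i x : size cs = size cl -> (i < size cl)%N ->
  fs_comb (incr_nth cs i) cl x = (nth (fs_one G) cl i x + fs_comb cs cl x)%N.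
Proof.
rewrite /fs_comb; elim: cl cs i => [|A cl IH] [|c cs] [|i] //= [sz] lt.
  by rewrite mulSn addnA.
by rewrite IH // addnCA.
Qed.

Lemma lengths_comb (G0 : {set G}) cl B k :
  (forall A, atom_over G0 A -> A \in cl) -> lengths G0 B k ->
  exists cs, [/\ size cs = size cl, k = sumn cs & forall x, B x = fs_comb cs cl x].
Proof.
move=> complete [As [<- atoms ->]] {B k}.
elim: As atoms => [|A As IH] atoms.
  exists (nseq (size cl) 0%N); rewrite size_nseq sumn_nseq; split => // x.
  by rewrite ffunE /fs_comb; elim: cl {complete} => //= A cl <-.
have [|cs [sz eAs eB]] := IH; first by move=> C CAs; apply: atoms; rewrite inE CAs orbT.
have Acl : A \in cl by apply/complete/atoms/mem_head.
exists (incr_nth cs (index A cl)); split.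
- by rewrite size_incr_nth sz index_mem Acl.
- by rewrite sumn_incr_nth -eAs.
by move=> x /=; rewrite fs_mulE fs_comb_incr ?index_mem // nth_index // eB.
Qed.

Lemma comb_lengths (G0 : {set G}) cl cs :
  (forall A, A \in cl -> atom_over G0 A) -> size cs = size cl ->
  lengths G0 [ffun x => fs_comb cs cl x] (sumn cs).
Proof.
move=> atoms sz; exists (flatten [seq nseq p.1 p.2 | p <- zip cs cl]); split.
- rewrite size_flatten /shape -map_comp -{2}(unzip1_zip (eq_leq sz)).
  by congr sumn; apply: eq_map => p /=; rewrite size_nseq.
- move=> A /flatten_mapP[p pcl]; rewrite mem_nseq => /andP[_ /eqP ->].
  by apply/atoms/(mem_zip2 pcl).
apply/ffunP => x; rewrite ffunE foldr_mulE /fs_comb {atoms sz}.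
elim: (zip cs cl) => //= p ps ->; rewrite map_cat sumn_cat map_nseq sumn_nseq.
by rewrite mulnC.
Qed.

Lemma lengths_combP (G0 : {set G}) cl B k :
  (forall A, atom_over G0 A <-> A \in cl) ->
  lengths G0 B k <->
  exists cs, [/\ size cs = size cl, k = sumn cs & forall x, B x = fs_comb cs cl x].
Proof.
move=> atomsP; split; first by apply: lengths_comb => A /atomsP.
move=> [cs [sz -> eB]]; have -> : B = [ffun x => fs_comb cs cl x].
  by apply/ffunP => x; rewrite ffunE eB.
by apply: comb_lengths => // A /atomsP.
Qed.
End FreeMonoid.

Section Counts.
Variables (G : finZmodType) (s : seq G).
Hypothesis s_uniq : uniq s.
Local Notation Supp := [set x in s].

Definition fs_counts (d : seq nat) : fseq G := [ffun x => nth 0%N d (index x s)].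

Lemma fs_counts_nth d i : i < size s -> fs_counts d (nth 0%R s i) = nth 0 d i.
Proof. by move=> lt; rewrite ffunE index_uniq. Qed.

Lemma fs_counts_out d x : (size d <= size s)%N -> x \notin s -> fs_counts d x = 0%N.
Proof. by move=> sz xs; rewrite ffunE nth_default // memNindex. Qed.

Lemma map_fs_counts d : size d = size s -> map (fs_counts d) s = d.
Proof.
move=> sz; apply: (@eq_from_nth _ 0%N); rewrite size_map ?sz // => i lt.
by rewrite (nth_map 0%R) // fs_counts_nth.
Qed.

Lemma supp_fs_counts d : size d = size s -> supp_in Supp (fs_counts d).
Proof. by move=> sz x; rewrite inE; apply: fs_counts_out; rewrite sz. Qed.

Lemma fs_countsK B : supp_in Supp B -> fs_counts (map B s) = B.
Proof.
move=> sB; apply/ffunP => x; case: (boolP (x \in s)) => xs.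
  by rewrite ffunE (nth_map 0%R) ?index_mem // nth_index.
by rewrite fs_counts_out ?size_map // sB // inE.
Qed.

Lemma big_supp (R : Type) (idx : R) (op : Monoid.com_law idx) (F : G -> R) :
  (forall x, x \notin s -> F x = idx) -> \big[op/idx]_x F x = \big[op/idx]_(x <- s) F x.
Proof.
move=> F0; rewrite (big_uniq s s_uniq) [X in _ = X]big_mkcond; apply: eq_bigr => x _.
by case: ifP => // /negbT /F0.
Qed.

Lemma len_fs_counts d : size d = size s -> fs_len (fs_counts d) = sumn d.
Proof.
move=> sz; rewrite /fs_len big_supp => [|x]; last by apply: fs_counts_out; rewrite sz.
by rewrite -{2}(map_fs_counts sz) sumnE big_map.
Qed.

Lemma sigma_fs_counts d :
  size d = size s -> fs_sigma (fs_counts d) = (\sum_(p <- zip s d) p.1 *+ p.2)%R.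
Proof.
move=> sz; rewrite /fs_sigma big_supp => [|x xs]; last by rewrite fs_counts_out ?sz.
by rewrite -{2}(map_fs_counts sz) -{2}(map_id s) zip_map big_map.
Qed.

Lemma vle_fs_counts u d : vle u d -> forall x, (fs_counts u x <= fs_counts d x)%N.
Proof. by case/vleP => _ le x; rewrite !ffunE. Qed.

Variable zsum : pred (seq nat).
Hypothesis zsumP : forall d, size d = size s -> fs_sigma (fs_counts d) = 0%R <-> zsum d.

Lemma atom_fs_countsP d :
  size d = size s -> atom_over Supp (fs_counts d) <-> minimal_zero_sum zsum d.
Proof.
move=> sz; split.
  move=> atomA; have [[_ zA] lA _] := atomA.
  apply/and3P; split; [exact/zsumP | by rewrite -len_fs_counts |].
  apply/allP => u; rewrite mem_below => ud; have szu : size u = size s.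
    by rewrite (vle_size ud).
  apply/implyP => zu; have {}zu : fs_sigma (fs_counts u) = 0%R by apply/zsumP.
  have [//|upos] := posnP (sumn u).
  have AU : fs_counts d = fs_counts u.
    apply: atom_le atomA _ _ (vle_fs_counts ud); last by rewrite len_fs_counts.
    by split; [exact: supp_fs_counts | exact: zu].
  by rewrite -(map_fs_counts sz) AU map_fs_counts ?eqxx ?orbT.
move=> /and3P[zd dpos /allP minimal]; split.
- by split; [exact: supp_fs_counts | exact/zsumP].
- by rewrite len_fs_counts.
move=> U V [sU zU] [sV zV] eA.
have szU : size (map U s) = size s by rewrite size_map.
have ud : map U s \in below d.
  rewrite mem_below -(map_fs_counts sz) vle_map.
  by apply/allP => x _; rewrite eA fs_mulE leq_addr.
have zu : zsum (map U s) by apply/zsumP; rewrite ?fs_countsK ?size_map.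
move: (minimal _ ud); rewrite zu /= => /orP[u0|/eqP ud'].
  by left; rewrite -(fs_countsK sU) len_fs_counts // (eqP u0).
right; rewrite /fs_len big1 // => x _; apply/eqP.
by move: (congr1 (fun S : fseq G => S x) eA); rewrite -ud' fs_countsK // fs_mulE; lia.
Qed.

Lemma atoms_by_enumeration cands b :
  all (minimal_zero_sum zsum) cands -> all (fun d => size d == size s) cands ->
  size b = size s ->
  all (fun i => unit_vec (size b) i (nth 0 b i).+1 \in cands) (iota 0 (size b)) ->
  all (fun u => zsum u ==> (0 < sumn u) ==> covered cands u) (below b) ->
  forall A, atom_over Supp A <-> A \in map fs_counts cands.
Proof.
move=> /allP cands_min /allP cands_size sb units small A; split; last first.
  by case/mapP => d dc ->; apply/atom_fs_countsP; [exact/eqP/cands_size | exact: cands_min].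
move=> atomA; have [[sA _] _ _] := atomA; rewrite -(fs_countsK sA).
have sa : size (map A s) = size s by rewrite size_map.
move: atomA; rewrite -{1}(fs_countsK sA) atom_fs_countsP // => /and3P[za apos /allP mina].
have /hasP[d dc da] : covered cands (map A s).
  by apply: (covered_bounded units small); rewrite ?sa ?sb.
have /and3P[zd dpos _] := cands_min d dc.
have := mina d; rewrite mem_below da => /(_ isT) /implyP /(_ zd).
by rewrite eqn0Ngt dpos => /eqP <-; apply: map_f.
Qed.

Lemma lengths_decompP cands B k :
  (forall A, atom_over Supp A <-> A \in map fs_counts cands) ->
  all (fun d => size d == size s) cands -> supp_in Supp B ->
  lengths Supp B k <-> decomp_length cands (map B s) k.
Proof.
move=> atomsP /allP cands_size sB; rewrite lengths_combP // size_map /decomp_length size_map.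
pose F cs i := sumn [seq p.1 * nth 0 p.2 i | p <- zip cs cands].
have combE cs x : fs_comb cs (map fs_counts cands) x = F cs (index x s).
  by rewrite /fs_comb zip_mapr -map_comp; congr sumn; apply: eq_map => p; rewrite /= ffunE.
have F_out cs : F cs (size s) = 0.
  rewrite /F sumnE big_map big1_seq // => p /andP[_ /mem_zip2 pc].
  by rewrite nth_default ?muln0 // (eqP (cands_size _ pc)).
split=> -[cs [sz -> eB]]; exists cs; split=> //.
  apply: (@eq_from_nth _ 0); rewrite size_map ?size_mkseq // => i lt.
  by rewrite nth_mkseq // (nth_map 0%R) // eB combE index_uniq.
move=> x; rewrite combE; case: (boolP (x \in s)) => xs; last by rewrite sB ?inE // memNindex.
have := congr1 (nth 0 ^~ (index x s)) eB.
by rewrite (nth_map 0%R) ?index_mem // nth_index // nth_mkseq ?index_mem.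
Qed.
End Counts.

Section CyclicWeights.
Variables (G : finZmodType) (g : G) (n : nat).
Hypothesis g_order : has_order g n.
Local Open Scope ring_scope.

Lemma mulrn_order_eq0 m : (g *+ m == 0) = (n %| m)%N.
Proof.
case: g_order => n_pos gn gk.
rewrite {1}(divn_eq m n) mulrnDr mulnC mulrnA gn mul0rn add0r /dvdn.
case: (m %% n)%N (ltn_pmod m n_pos) => [|r] lt; first by rewrite mulr0n !eqxx.
by rewrite (negbTE (gk r.+1 lt)).
Qed.

Lemma mulrn_order_inj : {in gtn n &, injective (fun m => g *+ m)}.
Proof.
move=> a b; rewrite !inE => an bn; wlog ab : a b an bn / (a <= b)%N => [hwlog|] eq_ab.
  by case/orP: (leq_total a b) => ?; [|symmetry]; apply: hwlog.
have : g *+ (b - a) == 0 by rewrite mulrnBr // eq_ab subrr.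
by rewrite mulrn_order_eq0 /dvdn modn_small; lia.
Qed.

Lemma cyclic_uniq ws : uniq ws -> all (gtn n) ws -> uniq (map (fun w => g *+ w) ws).
Proof.
move=> ws_uniq /allP ws_small; rewrite map_inj_in_uniq // => a b /ws_small an /ws_small bn.
exact: mulrn_order_inj.
Qed.

Lemma sigma_cyclic ws d : uniq ws -> all (gtn n) ws -> size d = size ws ->
  fs_sigma (fs_counts (map (fun w => g *+ w) ws) d) = g *+ wsum ws d.
Proof.
move=> ws_uniq ws_small sz; rewrite sigma_fs_counts ?size_map ?cyclic_uniq //.
elim: ws d {ws_uniq ws_small} sz => [|w ws IH] [|m d] //= => [_|[sz]]; first by rewrite big_nil.
by rewrite big_cons IH // -mulrnA mulrnDr.
Qed.

Lemma cyclic_zero_sum ws d : uniq ws -> all (gtn n) ws -> size d = size ws ->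
  fs_sigma (fs_counts (map (fun w => g *+ w) ws) d) = 0 <-> (n %| wsum ws d)%N.
Proof.
move=> ws_uniq ws_small sz; rewrite sigma_cyclic // -mulrn_order_eq0.
by split=> [->|/eqP].
Qed.
End CyclicWeights.

Section BitVectors.
Variable r : nat.
Local Open Scope ring_scope.

Definition bitvec (b : seq nat) : C2 r := \row_(j < r) (nth 0%N b j)%:R.

Lemma F2_nat_eq0 m : ((m%:R : 'F_2) == 0) = (2 %| m)%N.
Proof. by rewrite -(inj_eq val_inj) /= val_Fp_nat. Qed.

Lemma row_mulrnE (x : C2 r) m j : (x *+ m) 0 j = x 0 j *+ m.
Proof. by elim: m => [|m IH]; rewrite ?mulr0n ?mxE // !mulrS mxE IH. Qed.

Lemma bitvec_uniq pats :
  uniq [seq [seq (nth 0 b j %% 2)%N | j <- iota 0 r] | b <- pats] -> uniq (map bitvec pats).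
Proof.
pose bits (x : C2 r) := [seq val (x 0 j) | j <- enum 'I_r].
suff <- : map bits (map bitvec pats) = [seq [seq (nth 0 b j %% 2)%N | j <- iota 0 r] | b <- pats].
  exact: map_uniq.
rewrite -map_comp; apply: eq_map => b /=.
by rewrite -val_enum_ord -map_comp; apply: eq_map => j; rewrite /= mxE val_Fp_nat.
Qed.

Lemma C2_zero_sum pats d : uniq (map bitvec pats) -> size d = size pats ->
  fs_sigma (fs_counts (map bitvec pats) d) = 0 <->
  all (fun j => 2 %| wsum [seq nth 0 b j | b <- pats] d)%N (iota 0 r).
Proof.
move=> pats_uniq sz; rewrite sigma_fs_counts ?size_map //.
have entryE (j : 'I_r) : (\sum_(p <- zip (map bitvec pats) d) p.1 *+ p.2) 0 j =
    (wsum [seq nth 0 b j | b <- pats] d)%:R.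
  rewrite summxE; elim: pats d {pats_uniq} sz => [|b pats IH] [|m d] //= => [_|[sz]].
    by rewrite big_nil.
  by rewrite big_cons IH // row_mulrnE mxE -mulrnA natrD.
split=> [zero|/allP even].
  apply/allP => j; rewrite mem_iota /= => jr.
  have := congr1 (fun v : C2 r => v 0 (Ordinal jr)) zero.
  by rewrite /= entryE mxE => /eqP; rewrite F2_nat_eq0.
by apply/rowP => j; rewrite entryE mxE; apply/eqP; rewrite F2_nat_eq0 even // mem_iota /=.
Qed.
End BitVectors.

Section G0Atoms.
Variables (G : finZmodType) (g : G).
Hypothesis g_order : has_order g 6.

(* G0 listed as  0 g, 1 g, 3 g, 5 g = -g. *)
Definition G0_weights : seq nat := [:: 0; 1; 3; 5].
Definition G0_elems : seq G := map (fun w => (g *+ w)%R) G0_weights.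

Lemma G0_set : [set 0; g; g *+ 3; - g]%R = [set x in G0_elems].
Proof.
have neg_g : (- g = g *+ 5)%R.
  by case: g_order => _ g6 _; apply/eqP; rewrite eq_sym -subr_eq0 opprK -mulrSr g6.
by apply/setP => x; rewrite !inE neg_g mulr0n mulr1n -!orbA.
Qed.

Lemma G0_elems_uniq : uniq G0_elems.
Proof. exact: (cyclic_uniq g_order). Qed.

Definition G0_zsum (d : seq nat) : bool := 6 %| wsum G0_weights d.

Lemma G0_zsumP d :
  size d = size G0_elems -> fs_sigma (fs_counts G0_elems d) = 0%R <-> G0_zsum d.
Proof. by move=> sz; apply: cyclic_zero_sum. Qed.

(* 0, g^6, (-g)^6, g(-g), (3g)^2, g^3(3g), (3g)(-g)^3. *)
Definition G0_atom_counts : seq (seq nat) :=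
  [:: [:: 1; 0; 0; 0]; [:: 0; 6; 0; 0]; [:: 0; 0; 0; 6]; [:: 0; 1; 0; 1];
      [:: 0; 0; 2; 0]; [:: 0; 3; 1; 0]; [:: 0; 0; 1; 3]].

Lemma G0_atoms A :
  atom_over [set x in G0_elems] A <-> A \in map (fs_counts G0_elems) G0_atom_counts.
Proof.
by apply: (atoms_by_enumeration G0_elems_uniq G0_zsumP (b := [:: 0; 5; 1; 5])); vm_compute.
Qed.

Lemma G0_zero_sum B : zero_sum_over [set x in G0_elems] B -> G0_zsum (map B G0_elems).
Proof. by move=> [sB zB]; apply/G0_zsumP; rewrite ?fs_countsK ?size_map. Qed.

Lemma G0_lengthsP B k : zero_sum_over [set x in G0_elems] B ->
  lengths [set x in G0_elems] B k <-> decomp_length G0_atom_counts (map B G0_elems) k.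
Proof. by move=> [sB _]; apply: lengths_decompP; [exact: G0_elems_uniq | exact: G0_atoms | |]. Qed.
End G0Atoms.

Lemma G0_lincomb c1 c2 c3 c4 c5 c6 c7 :
  lincomb 4 [:: c1; c2; c3; c4; c5; c6; c7] G0_atom_counts =
  [:: c1; 6 * c2 + c4 + 3 * c6; 2 * c5 + c6 + c7; 6 * c3 + c4 + 3 * c7].
Proof. by rewrite /lincomb /=; congr [:: _; _; _; _] => /=; lia. Qed.

Lemma G0_lengths_without_3g K a c k : 6 %| a + 5 * c ->
  decomp_length G0_atom_counts [:: K; a; 0; c] k <->
  in_progression (K + (a + c + 4 * (a %% 6)) %/ 6) 4 ((minn a c - a %% 6) %/ 6) k.
Proof.
move=> hd; split.
  move=> [cs [sz -> eq]].
  case: cs sz eq => [|c1 [|c2 [|c3 [|c4 [|c5 [|c6 [|c7 [|? ?]]]]]]]] // _.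
  rewrite G0_lincomb => -[e0 e1 e3 e5].
  by exists ((c4 - a %% 6) %/ 6) => /=; lia.
move=> [t tT ->]; pose w := a %% 6 + 6 * t.
exists [:: K; (a - w) %/ 6; (c - w) %/ 6; w; 0; 0; 0].
by rewrite G0_lincomb /w; split => //=; [lia | congr [:: _; _; _; _]; lia].
Qed.

Lemma G0_lengths_with_3g K a b c k : 0 < b -> 6 %| a + 3 * b + 5 * c ->
  decomp_length G0_atom_counts [:: K; a; b; c] k <->
  in_progression (K + (a + c + 3 * b + 4 * (a %% 3)) %/ 6) 2 ((minn a c - a %% 3) %/ 3) k.
Proof.
move=> bpos hd; split.
  move=> [cs [sz -> eq]].
  case: cs sz eq => [|c1 [|c2 [|c3 [|c4 [|c5 [|c6 [|c7 [|? ?]]]]]]]] // _.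
  rewrite G0_lincomb => -[e0 e1 e3 e5].
  by exists ((c4 - a %% 3) %/ 3) => /=; lia.
move=> [t tT ->]; set r := a %% 3.
have [A eA] : exists A, a = r + 3 * t + 3 * A by exists ((a - r - 3 * t) %/ 3); lia.
have [C eC] : exists C, c = r + 3 * t + 3 * C by exists ((c - r - 3 * t) %/ 3); lia.
have [y [u [eu y2]]] : exists y u, A = 2 * u + y /\ y < 2 by exists (A %% 2), (A %/ 2); lia.
have [z [v [ev z2]]] : exists z v, C = 2 * v + z /\ z < 2 by exists (C %% 2), (C %/ 2); lia.
have [x ex] : exists x, b = 2 * x + y + z by exists ((b - y - z) %/ 2); lia.
exists [:: K; u; v; r + 3 * t; x; y; z].
by rewrite G0_lincomb; split => //=; [lia | congr [:: _; _; _; _]; lia].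
Qed.

Definition H_patterns : seq (seq nat) :=
  [:: [:: 0; 0; 0; 0; 0]; [:: 1; 0; 0; 0; 0]; [:: 0; 1; 0; 0; 0]; [:: 0; 0; 1; 0; 0];
      [:: 0; 0; 0; 1; 0]; [:: 0; 0; 0; 0; 1]; [:: 1; 1; 1; 1; 1]; [:: 1; 1; 1; 0; 0]].

Definition H_elems : seq (C2 5) := map (bitvec 5) H_patterns.

Lemma H_elems_uniq : uniq H_elems.
Proof. by apply: bitvec_uniq; vm_compute. Qed.

Definition H_zsum (d : seq nat) : bool :=
  all (fun j => 2 %| wsum [seq nth 0 b j | b <- H_patterns] d) (iota 0 5).

Lemma H_zsumP d :
  size d = size H_elems -> fs_sigma (fs_counts H_elems d) = 0%R <-> H_zsum d.
Proof. by rewrite size_map => sz; apply: C2_zero_sum H_elems_uniq sz. Qed.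

(* 0, the squares of the seven nonzero elements, and three further atoms. *)
Definition H_atom_counts : seq (seq nat) :=
  [:: [:: 1; 0; 0; 0; 0; 0; 0; 0]; [:: 0; 2; 0; 0; 0; 0; 0; 0];
      [:: 0; 0; 2; 0; 0; 0; 0; 0]; [:: 0; 0; 0; 2; 0; 0; 0; 0];
      [:: 0; 0; 0; 0; 2; 0; 0; 0]; [:: 0; 0; 0; 0; 0; 2; 0; 0];
      [:: 0; 0; 0; 0; 0; 0; 2; 0]; [:: 0; 0; 0; 0; 0; 0; 0; 2];
      [:: 0; 1; 1; 1; 1; 1; 1; 0]; [:: 0; 1; 1; 1; 0; 0; 0; 1];
      [:: 0; 0; 0; 0; 1; 1; 1; 1]].

Lemma H_atoms A :
  atom_over [set x in H_elems] A <-> A \in map (fs_counts H_elems) H_atom_counts.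
Proof.
apply: (atoms_by_enumeration H_elems_uniq H_zsumP (b := [:: 0; 1; 1; 1; 1; 1; 1; 1])).
all: by vm_compute.
Qed.

Lemma H_zero_sum d :
  size d = size H_elems -> H_zsum d -> zero_sum_over [set: C2 5] (fs_counts H_elems d).
Proof. by move=> sz zd; split=> [x|]; [rewrite inE | apply/H_zsumP]. Qed.

Lemma H_lengthsP d k : size d = size H_elems ->
  lengths [set: C2 5] (fs_counts H_elems d) k <-> decomp_length H_atom_counts d k.
Proof.
move=> sz; have supp := supp_fs_counts sz.
by rewrite (lengths_setT k supp) (lengths_decompP H_elems_uniq k H_atoms) ?map_fs_counts
  ?H_elems_uniq.
Qed.

Lemma H_lincomb z c1 c2 c3 c4 c5 c6 c7 al be ga :
  lincomb 8 [:: z; c1; c2; c3; c4; c5; c6; c7; al; be; ga] H_atom_counts =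
  [:: z; 2 * c1 + al + be; 2 * c2 + al + be; 2 * c3 + al + be;
      2 * c4 + al + ga; 2 * c5 + al + ga; 2 * c6 + al + ga; 2 * c7 + be + ga].
Proof. by rewrite /lincomb /=; congr [:: _; _; _; _; _; _; _; _] => /=; lia. Qed.

Lemma H_lengths_step4 K T k :
  decomp_length H_atom_counts [:: K; 2 * T; 2 * T; 2 * T; 2 * T; 2 * T; 2 * T; 0] k <->
  in_progression (K + 2 * T) 4 T k.
Proof.
split.
  move=> [cs [sz -> eq]].
  case: cs sz eq => [|z [|c1 [|c2 [|c3 [|c4 [|c5 [|c6 [|c7 [|al [|be [|ga [|? ?]]]]]]]]]]]] // _.
  rewrite H_lincomb => -[e0 e1 e2 e3 e4 e5 e6 e7].
  by exists (T - al %/ 2) => /=; lia.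
move=> [t tT ->]; exists [:: K; t; t; t; t; t; t; 0; 2 * (T - t); 0; 0].
by rewrite H_lincomb; split => //=; [lia | congr [:: _; _; _; _; _; _; _; _]; lia].
Qed.

Lemma H_lengths_step2 K T k :
  decomp_length H_atom_counts [:: K; T + T %% 2; T + T %% 2; T + T %% 2;
                           T - T %% 2; T - T %% 2; T - T %% 2; 2] k <->
  in_progression (K + T + 1) 2 T k.
Proof.
split.
  move=> [cs [sz -> eq]].
  case: cs sz eq => [|z [|c1 [|c2 [|c3 [|c4 [|c5 [|c6 [|c7 [|al [|be [|ga [|? ?]]]]]]]]]]]] // _.
  rewrite H_lincomb => -[e0 e1 e2 e3 e4 e5 e6 e7].
  by exists (T - (2 * al + be + ga) %/ 2) => /=; lia.
move=> [t tT ->]; set m := T - t; set p := T + T %% 2; set q := T - T %% 2.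
have [i [em|em]] : exists i, m = 2 * i \/ m = 2 * i + 1 by exists (m %/ 2); lia.
  exists [:: K; (p - m) %/ 2; (p - m) %/ 2; (p - m) %/ 2;
             (q - m) %/ 2; (q - m) %/ 2; (q - m) %/ 2; 1; m; 0; 0].
  by rewrite H_lincomb; split => //=; [lia | congr [:: _; _; _; _; _; _; _; _]; lia].
exists [:: K; (p - m - 1) %/ 2; (p - m - 1) %/ 2; (p - m - 1) %/ 2;
           (q - m + 1) %/ 2; (q - m + 1) %/ 2; (q - m + 1) %/ 2; 0; m - 1; 2; 0].
by rewrite H_lincomb; split => //=; [lia | congr [:: _; _; _; _; _; _; _; _]; lia].
Qed.

Lemma G0_lengths_in_H a : size a = 4 -> G0_zsum a ->
  exists d, [/\ size d = size H_elems, H_zsum d &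
    forall k, decomp_length G0_atom_counts a k <-> decomp_length H_atom_counts d k].
Proof.
case: a => [|K [|a [|b [|c [|? ?]]]]] // _; rewrite /G0_zsum /wsum /= => hd.
have [b0|bpos] := posnP b.
  subst b; pose T := (minn a c - a %% 6) %/ 6; pose n0 := K + (a + c + 4 * (a %% 6)) %/ 6.
  exists [:: n0 - 2 * T; 2 * T; 2 * T; 2 * T; 2 * T; 2 * T; 2 * T; 0]; split => //.
    by rewrite /H_zsum /wsum /=; lia.
  move=> k; rewrite G0_lengths_without_3g ?H_lengths_step4; last by lia.
  by have -> : n0 - 2 * T + 2 * T = n0 by rewrite /n0 /T; lia.
pose T := (minn a c - a %% 3) %/ 3; pose n0 := K + (a + c + 3 * b + 4 * (a %% 3)) %/ 6.
exists [:: n0 - T - 1; T + T %% 2; T + T %% 2; T + T %% 2;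
          T - T %% 2; T - T %% 2; T - T %% 2; 2]; split => //.
  by rewrite /H_zsum /wsum /=; lia.
move=> k; rewrite G0_lengths_with_3g ?H_lengths_step2 //; last by lia.
by have -> : n0 - T - 1 + T + 1 = n0 by rewrite /n0 /T; lia.
Qed.

Local Open Scope ring_scope.

Theorem lemma3p14 (G : finZmodType) (g : G) :
  has_order g 6 ->
  system_subset [set 0; g; g *+ 3; - g] [set: C2 5].
Proof.
move=> g_order L [B [zB lenB]]; rewrite G0_set // in zB lenB.
have [d [sz zd lens]] := G0_lengths_in_H (size_map B (G0_elems g)) (G0_zero_sum g_order zB).
exists (fs_counts H_elems d); split; first exact: H_zero_sum.
by move=> k; rewrite lenB G0_lengthsP // lens H_lengthsP.
Qed.
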